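(* Let $K$ be an algebraically closed field and $\varphi:V\to V$ a $K$-linear map of a finite dimensional $K$-vector space $V$. Let $\{\lambda_1,\dots,\lambda_p\}\subseteq K$ be the set of all ($p$ distinct) eigenvalues of $\varphi$ and $m=\max\{\dim(\ker(\varphi-\lambda_i1_V))\mid1\le i\le p\}$. Then the centralizer $C_\varphi=\{\psi\in\mathrm{Hom}_K(V,V)\mid\psi\circ\varphi=\varphi\circ\psi\}$ satisfies all polynomial identities of the full matrix algebra $M_{m\times m}(K[t])$.
   Context: $K[t]$ is the polynomial ring over $K$ in one indeterminate. *)

From HB Require Import structures.
From mathcomp Require Import all_boot all_order all_algebra vector.
Set Implicit Arguments. Unset Strict Implicit. Unset Printing Implicit Defensive.
Import Order.TTheory GRing.Theory Num.Theory.
Local Open Scope ring_scope.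

(* Noncommutative polynomials with coefficients in K in the variables
   x_0, x_1, ... (elements of the free algebra K<x_0,x_1,...>), given as
   syntax trees: every element of the free algebra is represented. *)
Inductive ncpoly (K : Type) : Type :=
  | NCX of nat
  | NCC of K
  | NCAdd of ncpoly K & ncpoly K
  | NCMul of ncpoly K & ncpoly K.

Fixpoint nceval (K A : Type) (add mul : A -> A -> A) (c : K -> A)
    (e : nat -> A) (f : ncpoly K) : A :=
  match f with
  | NCX i => e i
  | NCC a => c a
  | NCAdd f g => add (nceval add mul c e f) (nceval add mul c e g)
  | NCMul f g => mul (nceval add mul c e f) (nceval add mul c e g)
  end.

Definition nceval_mx (K : fieldType) (m : nat) (e : nat -> 'M[{poly K}]_m)
    (f : ncpoly K) : 'M[{poly K}]_m :=
  nceval (fun x y => x + y) (fun x y => x *m y) (fun a => (a%:P)%:M) e f.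

Definition mx_poly_identity (K : fieldType) (m : nat) (f : ncpoly K) : Prop :=
  forall e : nat -> 'M[{poly K}]_m, nceval_mx e f = 0.

Definition nceval_End (K : fieldType) (vT : vectType K) (e : nat -> 'End(vT))
    (f : ncpoly K) : 'End(vT) :=
  nceval (fun x y => x + y) (fun x y => (x \o y)%VF) (fun a => a *: \1%VF) e f.

Definition centralizer (K : fieldType) (vT : vectType K) (phi : 'End(vT)) :
    pred 'End(vT) :=
  fun psi => (psi \o phi)%VF == (phi \o psi)%VF.

Definition eigenvalue (K : fieldType) (vT : vectType K) (phi : 'End(vT)) (a : K)
  : bool := lker (phi - a *: \1%VF) != 0%VS.

(* m = max { dim ker(phi - lambda 1_V) | lambda eigenvalue of phi }
   (with max of the empty set = 0). *)
Definition max_eigdim (K : fieldType) (vT : vectType K) (phi : 'End(vT))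
    (m : nat) : Prop :=
  (forall a, eigenvalue phi a -> leq (\dim (lker (phi - a *: \1%VF))) m) /\
  (m = 0%N \/ exists a, eigenvalue phi a /\ \dim (lker (phi - a *: \1%VF)) = m).

(* The centralizer preserves every generalized eigenspace
   V_(a,k) = ker (phi - a)^k of phi.  Viewed as a K[t]-module (t acting by
   phi), V_(a,k) is generated by dim ker (phi - a) <= m vectors, since
   V_(a,k) / (phi - a) V_(a,k) has that dimension; hence it is a quotient of
   K[t]^m, and every psi commuting with phi lifts along this quotient map to
   an m x m matrix over K[t].  A polynomial identity of M_m(K[t]) evaluated
   at the lifts is 0, so its evaluation at elements of the centralizer
   vanishes on every generalized eigenspace.  Over an algebraically closed
   field these spaces span V (Bezout's identity splits any vector killed by
   a polynomial), so that evaluation is 0. *)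

From HB Require Import structures.
From mathcomp Require Import all_boot all_order all_algebra vector.
From Stdlib Require Import Classical.
From mathcomp Require Import zify.
Set Implicit Arguments. Unset Strict Implicit. Unset Printing Implicit Defensive.
Import GRing.Theory.
Local Open Scope ring_scope.

Section HornerLfun.

(* 'End(vT) is a ring (lfun_algType) only when vT is nontrivial. *)
Variables (K : fieldType) (vT : vectType K) (vT_proper : (0 < dim vT)%N).
Variable phi : 'End(vT).

Definition horner_lfun (p : {poly K}) : 'End(vT) :=
  horner_alg (phi : lfun_algType vT_proper) p.

Local Notation P := horner_lfun.

Lemma horner_lfunD p q v : P (p + q) v = P p v + P q v.
Proof. by rewrite /P rmorphD add_lfunE. Qed.

Lemma horner_lfunM p q v : P (p * q) v = P p (P q v).
Proof. by rewrite /P mulrC rmorphM /= comp_lfunE. Qed.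

Lemma horner_lfunC c v : P c%:P v = c *: v.
Proof. by rewrite /P horner_algC scale_lfunE id_lfunE. Qed.

Lemma horner_lfunX v : P 'X v = phi v.
Proof. by rewrite /P horner_algX. Qed.

Lemma horner_lfunZ c p v : P (c *: p) v = c *: P p v.
Proof. by rewrite -mul_polyC horner_lfunM horner_lfunC. Qed.

Lemma horner_lfun0 v : P 0 v = 0.
Proof. by rewrite /P rmorph0 zero_lfunE. Qed.

Lemma horner_lfun1 v : P 1 v = v.
Proof. by rewrite -polyC1 horner_lfunC scale1r. Qed.

Lemma horner_lfun_sum I (r : seq I) (F : I -> {poly K}) v :
  P (\sum_(i <- r) F i) v = \sum_(i <- r) P (F i) v.
Proof.
elim: r => [|i r IHr]; first by rewrite !big_nil horner_lfun0.
by rewrite !big_cons horner_lfunD IHr.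
Qed.

Lemma horner_lfun_XsubC a : P ('X - a%:P) = (phi - a *: \1)%VF.
Proof. by rewrite /P rmorphB /= horner_algX horner_algC. Qed.

Lemma horner_lfun_comm psi p v :
  (psi \o phi = phi \o psi)%VF -> psi (P p v) = P p (psi v).
Proof.
move=> psi_phi; elim/poly_ind: p v => [|p c IHp] v.
  by rewrite !horner_lfun0 linear0.
rewrite !horner_lfunD !horner_lfunC !horner_lfunM !horner_lfunX linearD linearZ /=.
by rewrite IHp -[psi (phi _)]comp_lfunE psi_phi comp_lfunE.
Qed.

Lemma horner_lfun_annihilator v : exists2 p : {poly K}, p != 0 & P p v = 0.
Proof.
pose X := [tuple P 'X^i v | i < (dim vT).+1].
have X_dep : ~~ free X.
  by rewrite /free size_tuple neq_ltn ltnS (leq_trans (dimvS (subvf _))) ?dimvf.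
have [k [Xk0 [i ki]]] :
    exists k : 'I_(dim vT).+1 -> K, \sum_i k i *: X`_i = 0 /\ exists i, k i != 0.
  apply: NNPP => no_rel; apply: (negP X_dep); apply/freeP => k Xk0 i.
  by apply/eqP; apply: contra_notT no_rel => ki; exists k; split; last exists i.
exists (\poly_(j < (dim vT).+1) k (inord j)).
  apply: contraNneq ki => /(congr1 (fun p : {poly K} => p`_i)) /eqP.
  by rewrite coef_poly ltn_ord inord_val coef0.
rewrite poly_def horner_lfun_sum -[RHS]Xk0; apply: eq_bigr => j _.
by rewrite inord_val horner_lfunZ nth_mktuple.
Qed.

Section ModuleMap.

Variables (m : nat) (w : 'I_m -> vT).

(* The K[t]-module map K[t]^m -> V sending the j-th basis vector to w j. *)
Definition polycomb (x : 'cV[{poly K}]_m) : vT := \sum_j P (x j 0) (w j).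

Lemma polycombD x y : polycomb (x + y) = polycomb x + polycomb y.
Proof.
by rewrite /polycomb -big_split; apply: eq_bigr => j _; rewrite mxE horner_lfunD.
Qed.

Lemma polycomb0 : polycomb 0 = 0.
Proof. by rewrite /polycomb big1 // => j _; rewrite mxE horner_lfun0. Qed.

Definition mx_represents (B : 'M[{poly K}]_m) (psi : 'End(vT)) : Prop :=
  forall x, polycomb (B *m x) = psi (polycomb x).

Lemma mx_representsD A B psi chi :
  mx_represents A psi -> mx_represents B chi -> mx_represents (A + B) (psi + chi).
Proof. by move=> rA rB x; rewrite mulmxDl polycombD rA rB add_lfunE. Qed.

Lemma mx_representsM A B psi chi :
  mx_represents A psi -> mx_represents B chi -> mx_represents (A *m B) (psi \o chi)%VF.
Proof. by move=> rA rB x; rewrite -mulmxA rA rB comp_lfunE. Qed.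

Lemma mx_represents_scalar c : mx_represents (c%:P)%:M (c *: \1%VF).
Proof.
move=> x; rewrite mul_scalar_mx scale_lfunE id_lfunE /polycomb scaler_sumr.
by apply: eq_bigr => j _; rewrite mxE horner_lfunM horner_lfunC.
Qed.

Lemma mx_represents_nceval (B : nat -> 'M[{poly K}]_m) (e : nat -> 'End(vT)) :
  (forall i, mx_represents (B i) (e i)) ->
  forall f, mx_represents (nceval_mx B f) (nceval_End e f).
Proof.
move=> rBe; elim=> [i|c|f IHf g IHg|f IHf g IHg] /=.
- exact: rBe.
- exact: mx_represents_scalar.
- exact: mx_representsD.
- exact: mx_representsM.
Qed.

Lemma commuting_mx_represented (g : {poly K}) psi :
  (psi \o phi = phi \o psi)%VF ->
  (forall j, P g (w j) = 0) ->
  (forall v, P g v = 0 -> exists x, v = polycomb x) ->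
  {B | mx_represents B psi}.
Proof.
move=> psi_phi gw w_gen.
have col_psi j : exists x, psi (w j) == polycomb x.
  have /w_gen [x ->] : P g (psi (w j)) = 0 by rewrite -horner_lfun_comm // gw linear0.
  by exists x.
exists (\matrix_(i, j) xchoose (col_psi j) i 0) => x.
rewrite /polycomb; under eq_bigr => i _ do rewrite mxE horner_lfun_sum.
rewrite exchange_big linear_sum; apply: eq_bigr => j _ /=.
rewrite horner_lfun_comm // (eqP (xchooseP (col_psi j))) linear_sum.
by apply: eq_bigr => i _; rewrite mxE mulrC horner_lfunM.
Qed.

End ModuleMap.

(* ker (r(phi))^k is generated by dim ker r(phi) elements: a basis of a
   complement W of r(phi) (ker r(phi)^k) in ker r(phi)^k, padded with zeros,
   since dim W = dim (ker r(phi) :&: ker r(phi)^k). *)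
Lemma horner_lfun_exp_ker_generated (r : {poly K}) (k m : nat) :
  (\dim (lker (P r)) <= m)%N ->
  exists w : 'I_m -> vT, (forall j, P (r ^+ k) (w j) = 0) /\
    forall v, P (r ^+ k) v = 0 -> exists x, v = polycomb w x.
Proof.
move=> ker_le_m; pose N := P r; pose U := lker (P (r ^+ k)).
have NU : (N @: U <= U)%VS.
  apply/subvP => _ /memv_imgP [y + ->]; rewrite !memv_ker => /eqP yU.
  by rewrite -horner_lfunM mulrC horner_lfunM yU linear0.
pose W := (U :\: N @: U)%VS.
have U_WN : (W + N @: U)%VS = U.
  by rewrite -{2}(addv_diff_cap U (N @: U)) (capv_idPr NU).
have dimW : (\dim W <= m)%N.
  have := dimv_cap_compl U (N @: U); have := limg_ker_dim N U.
  have : (\dim (U :&: lker N) <= m)%N.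
    by apply: leq_trans ker_le_m; rewrite dimvS ?capvSr.
  rewrite (capv_idPr NU) /W; lia.
have sizeX : size (vbasis W ++ nseq (m - \dim W) 0) == m.
  by rewrite size_cat size_tuple size_nseq subnKC.
pose X := Tuple sizeX.
have X_W x : x \in (X : seq vT) -> x \in W.
  rewrite mem_cat => /orP [/vbasis_mem //|].
  by rewrite mem_nseq => /andP [_ /eqP ->]; rewrite mem0v.
pose w (j : 'I_m) := X`_j.
have wU j : w j \in U by apply/(subvP (diffvSl U _))/X_W/mem_nth; rewrite size_tuple.
have W_span y : y \in W -> y = \sum_j coord X j y *: w j.
  move=> yW; apply: coord_span; rewrite -(span_basis (vbasisP W)) in yW.
  by apply: subvP yW; apply/span_subvP => x Wx; rewrite memv_span // mem_cat Wx.
have approx i v : v \in U ->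
    exists x, exists2 v', v' \in U & v = polycomb w x + P (r ^+ i) v'.
  move=> vU; elim: i => [|i [x [v' v'U ->]]].
    by exists 0, v; rewrite // polycomb0 expr0 add0r horner_lfun1.
  rewrite -U_WN in v'U; case/memv_addP: v'U => y yW [_ /memv_imgP [v'' v''U ->] ->].
  exists (x + \col_j (coord X j y *: r ^+ i)), v'' => //.
  rewrite polycombD -addrA; congr (_ + _).
  rewrite linearD /= exprSr horner_lfunM [y in LHS](W_span y yW) linear_sum /polycomb.
  by congr (_ + _); apply: eq_bigr => j _; rewrite mxE horner_lfunZ linearZ.
exists w; split => [j|v vU]; first by apply/eqP; rewrite -memv_ker.
have /(approx k) [x [v' + ->]] : v \in U by rewrite memv_ker vU.
by rewrite memv_ker => /eqP ->; rewrite addr0; exists x.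
Qed.

End HornerLfun.

Section ClosedField.

Variables (K : closedFieldType) (vT : vectType K) (vT_proper : (0 < dim vT)%N).
Variable phi : 'End(vT).

Local Notation P := (horner_lfun vT_proper phi).

Variable F : 'End(vT).
Hypothesis F_gen_eigen :
  forall a k v, P (('X - a%:P) ^+ k) v = 0 -> F v = 0.

(* Induction on size p: if z is a root of p = q (X - z)^k with q(z) != 0,
   Bezout's identity u1 (X - z)^k + u2 q = 1 splits v into a part killed by
   q and a part killed by (X - z)^k. *)
Lemma lfun_vanish_horner_ker p v : p != 0 -> P p v = 0 -> F v = 0.
Proof.
have [n] := ubnP (size p); elim: n p v => // n IHn p v le_p_n p0 pv0.
have [/closed_rootP [z pz] | /negPn /size_poly1P [c c0 pc]] := boolP (size p != 1%N).
  have [k [q + Dp]] := multiplicity_XsubC p z; rewrite p0 /= => qz.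
  have k_gt0 : (0 < k)%N.
    by case: k Dp => // Dp; move: pz; rewrite Dp expr0 mulr1 (negbTE qz).
  have q0 : q != 0 by apply: contraNneq p0 => q0; rewrite Dp q0 mul0r.
  have size_q : (size q < n)%N.
    move: le_p_n; rewrite Dp size_Mmonic ?monic_exp ?monicXsubC // size_exp_XsubC.
    by rewrite addnS ltnS => /(leq_trans _)-> //; rewrite -addn1 leq_add2l.
  have /Bezout_eq1_coprimepP [[u1 u2] /= bez] : coprimep (('X - z%:P) ^+ k) q.
    by rewrite coprimep_sym coprimep_expr // coprimep_XsubC.
  have kill_q : P q (P (u1 * ('X - z%:P) ^+ k) v) = 0.
    by rewrite -horner_lfunM mulrCA -Dp horner_lfunM pv0 linear0.
  have kill_Xz : P (('X - z%:P) ^+ k) (P (u2 * q) v) = 0.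
    by rewrite -horner_lfunM mulrCA [_ * q]mulrC -Dp horner_lfunM pv0 linear0.
  rewrite -[v](horner_lfun1 vT_proper phi) -bez horner_lfunD linearD /=.
  by rewrite (IHn q _ size_q q0 kill_q) (F_gen_eigen kill_Xz) add0r.
move: pv0; rewrite pc horner_lfunC => /eqP.
by rewrite scaler_eq0 (negbTE c0) => /eqP ->; rewrite linear0.
Qed.

Lemma lfun_eq0_gen_eigen : F = 0.
Proof.
apply/lfunP => v; rewrite zero_lfunE.
have [p p0 pv0] := horner_lfun_annihilator vT_proper phi v.
exact: lfun_vanish_horner_ker p0 pv0.
Qed.

End ClosedField.

Lemma lfun_dim0_eq0 (K : fieldType) (vT : vectType K) (f : 'End(vT)) :
  dim vT = 0%N -> f = 0.
Proof.
move=> dim0; apply/lfunP => v; rewrite zero_lfunE.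
have : v \in (fullv : {vspace vT}) := memvf v.
have /eqP -> : fullv == 0%VS :> {vspace vT} by rewrite -dimv_eq0 dimvf dim0.
by rewrite memv0 => /eqP ->; rewrite linear0.
Qed.

Lemma max_eigdim_ker (K : fieldType) (vT : vectType K) (phi : 'End(vT)) m :
  max_eigdim phi m -> forall a, leq (\dim (lker (phi - a *: \1%VF))) m.
Proof.
move=> [eig_le_m _] a; have [/eig_le_m //|] := boolP (eigenvalue phi a).
by rewrite negbK => /eqP ->; rewrite dimv0.
Qed.

Theorem corollary5p3 (K : closedFieldType) (vT : vectType K) (phi : 'End(vT))
    (m : nat) :
  max_eigdim phi m ->
  forall f : ncpoly K, mx_poly_identity m f ->
  forall e : nat -> 'End(vT), (forall i, e i \in centralizer phi) ->
  nceval_End e f = 0.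
Proof.
move=> phi_m f f_id e e_phi.
have [/lfun_dim0_eq0 // | vT_proper] := posnP (dim vT).
apply: (@lfun_eq0_gen_eigen _ _ vT_proper phi) => a k v.
have /(horner_lfun_exp_ker_generated k) [w [w_ker w_gen]] :
    (\dim (lker (horner_lfun vT_proper phi ('X - a%:P))) <= m)%N.
  by rewrite horner_lfun_XsubC; exact: max_eigdim_ker.
have lift i := commuting_mx_represented (eqP (e_phi i)) w_ker w_gen.
have lift_f := mx_represents_nceval (fun i => svalP (lift i)) f.
by move=> /w_gen [x ->]; rewrite -lift_f f_id mul0mx polycomb0.
Qed.
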